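(* Let $\mu>0$, $\lambda\ge0$, $k_M\in\mathbb{R}$, and let $k$ be the solution of $$k''=-\tfrac12k^3-\lambda k+\mu,\qquad k(0)=k_M,\quad k'(0)=0.$$ Assume $k$ is nonconstant and $k_M=\max k$. Then $k$ is defined and bounded on all of $\mathbb{R}$, and there exist real constants $\alpha,\beta,\gamma$ with $\gamma\in(-1,0)$, $\omega>0$ and $m\in(0,1)$ such that $$k(s)=\frac{\alpha\,\mathrm{cn}(\omega s\mid m)+\beta}{\gamma\,\mathrm{cn}(\omega s\mid m)+1}\qquad\text{for all }s\in\mathbb{R},$$ where $\mathrm{cn}(\cdot\mid m)$ is the Jacobi elliptic cosine function with parameter $m$.
   Context: The Jacobi elliptic function $y(u)=\mathrm{cn}(u\mid m)$, $m\in(0,1)$, is the solution of $(y')^2=(1-y^2)(1-m+my^2)$ with $y(0)=1$ (equivalently $\mathrm{cn}(u\mid m)=\cos\varphi$ where $u=\int_0^\varphi(1-m\sin^2\psi)^{-1/2}d\psi$). *)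

From Stdlib Require Import Reals.
Open Scope R_scope.

(* For m in (0,1) the integral is a
   strictly increasing bijection R -> R, so am is uniquely determined. *)
Definition is_jacobi_am (m : R) (am : R -> R) : Prop :=
  forall u : R,
    exists pr : Riemann_integrable
                  (fun psi => / sqrt (1 - m * (sin psi) ^ 2)) 0 (am u),
      RiemannInt pr = u.

Definition is_jacobi_cn (m : R) (cn : R -> R) : Prop :=
  exists am : R -> R, is_jacobi_am m am /\ forall u, cn u = cos (am u).

Definition kode (lam mu x : R) : R := - (1/2) * x ^ 3 - lam * x + mu.

(* At the maximum k''(0) = kode kM, which is <= 0 at an interior maximum and
   cannot vanish, since then k would be the constant equilibrium; hence kM > 0.
   The first integral k'^2 = c - k^4/4 - lam k^2 + 2 mu k is then a quartic in k
   with real roots kM > kn and a complex pair z, conj z; matching coefficients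
   gives 8 mu = (kM + kn)(4 lam + kM^2 + kn^2), and cn_A = |kM - z|,
   cn_B = |kn - z|. The classical reduction of such an integral
   (Byrd-Friedman 259.00) yields the Moebius transform of cn with the parameters
   cn_alpha, ..., cn_omega; we check directly that it solves the ODE on all of R
   with k's initial data, and uniqueness for this locally Lipschitz ODE (a
   Gronwall argument on the squared distance in phase space) identifies it with
   k on (a, b). *)

From Stdlib Require Import Reals Lra Psatz.
From Coquelicot Require Import Coquelicot.
Open Scope R_scope.

Lemma kode_lipschitz lam mu M x y : Rabs x <= M -> Rabs y <= M ->
  Rabs (kode lam mu x - kode lam mu y) <= (3/2 * M ^ 2 + Rabs lam) * Rabs (x - y).
Proof.
  intros Hx Hy.
  assert (Hdiff : kode lam mu x - kode lam mu y = (x - y) * (- (x^2 + x*y + y^2) / 2 - lam)).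
  { unfold kode. field. }
  rewrite Hdiff, Rabs_mult, Rmult_comm.
  apply Rmult_le_compat_r; [apply Rabs_pos|].
  pose proof (Rle_abs x); pose proof (Rabs_maj2 x).
  pose proof (Rle_abs y); pose proof (Rabs_maj2 y).
  pose proof (Rle_abs lam); pose proof (Rabs_maj2 lam).
  assert (0 <= x^2 + x*y + y^2 <= 3 * M^2) by (split; nra).
  apply Rabs_le; split; nra.
Qed.

Lemma bounded_on_segment (f : R -> R) x y : x <= y ->
  (forall c, x <= c <= y -> continuity_pt f c) ->
  exists M, forall c, x <= c <= y -> Rabs (f c) <= M.
Proof.
  intros Hxy Hf.
  destruct (continuity_ab_maj (fun c => Rabs (f c)) x y Hxy) as [p [Hp _]].
  - intros c Hc. apply (continuity_pt_comp f Rabs); [apply Hf, Hc | apply Rcontinuity_abs].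
  - exists (Rabs (f p)). exact Hp.
Qed.

Lemma exp_weighted_mvt (w w' : R -> R) c x y : x < y ->
  (forall s, x <= s <= y -> derivable_pt_lim w s (w' s)) ->
  exists z, x < z < y /\
    exp (c * y) * w y - exp (c * x) * w x = exp (c * z) * (c * w z + w' z) * (y - x).
Proof.
  intros Hxy Hw.
  destruct (MVT_cor2 (fun s => exp (c * s) * w s)
              (fun s => exp (c * s) * (c * w s + w' s)) x y Hxy) as [z [Hz Hzin]].
  - intros s Hs.
    replace (exp (c * s) * (c * w s + w' s))
      with (c * exp (c * s) * w s + exp (c * s) * w' s) by ring.
    apply (derivable_pt_lim_mult (fun s => exp (c * s)) w); [|apply Hw, Hs].
    apply is_derive_Reals. auto_derive; [easy | ring].
  - exists z. split; [exact Hzin | exact Hz].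
Qed.

(* Gronwall: [exp (-C s) w s] decreases and [exp (C s) w s] increases. *)
Lemma gronwall_vanish (w w' : R -> R) C x y : x < y ->
  (forall s, x <= s <= y -> derivable_pt_lim w s (w' s)) ->
  (forall s, x <= s <= y -> 0 <= w s) ->
  (forall s, x <= s <= y -> Rabs (w' s) <= C * w s) ->
  (w x = 0 <-> w y = 0).
Proof.
  intros Hxy Hw Hpos Hbnd. split; intros H0.
  - destruct (exp_weighted_mvt w w' (- C) x y Hxy Hw) as [z [Hz Hmvt]].
    rewrite H0, Rmult_0_r, Rminus_0_r in Hmvt.
    pose proof (Rle_abs (w' z)); pose proof (Hbnd z ltac:(lra)).
    pose proof (exp_pos (- C * z)); pose proof (exp_pos (- C * y)).
    pose proof (Hpos y ltac:(lra)).
    assert (exp (- C * y) * w y <= 0).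
    { rewrite Hmvt. apply Rmult_le_0_r; [|lra]. apply Rmult_le_0_l; lra. }
    nra.
  - destruct (exp_weighted_mvt w w' C x y Hxy Hw) as [z [Hz Hmvt]].
    rewrite H0, Rmult_0_r, Rminus_0_l in Hmvt.
    pose proof (Rabs_maj2 (w' z)); pose proof (Hbnd z ltac:(lra)).
    pose proof (exp_pos (C * z)); pose proof (exp_pos (C * x)).
    pose proof (Hpos x ltac:(lra)).
    assert (0 <= exp (C * x) * w x).
    { apply Rmult_le_pos; lra. }
    assert (0 <= exp (C * z) * (C * w z + w' z) * (y - x)).
    { apply Rmult_le_pos; [apply Rmult_le_pos|]; lra. }
    nra.
Qed.

Lemma kode_energy_derivative_bound lam mu M x y v : Rabs x <= M -> Rabs y <= M ->
  Rabs (2 * (x - y) * v + 2 * v * (kode lam mu x - kode lam mu y))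
  <= (1 + 3/2 * M ^ 2 + Rabs lam) * ((x - y) * (x - y) + v * v).
Proof.
  intros Hx Hy.
  pose proof (kode_lipschitz lam mu M x y Hx Hy) as Hlip.
  set (L := 3/2 * M ^ 2 + Rabs lam) in *.
  set (u := x - y) in *. set (f := kode lam mu x - kode lam mu y) in *.
  assert (HL : 0 <= L) by (unfold L; pose proof (Rabs_pos lam); nra).
  assert (Huv : 2 * Rabs u * Rabs v <= u * u + v * v).
  { pose proof (Rsqr_abs u); pose proof (Rsqr_abs v); unfold Rsqr in *.
    pose proof (pow2_ge_0 (Rabs u - Rabs v)). nra. }
  eapply Rle_trans; [apply Rabs_triang|].
  rewrite !Rabs_mult, (Rabs_pos_eq 2); [|lra].
  pose proof (Rabs_pos u); pose proof (Rabs_pos v).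
  assert (Rabs v * Rabs f <= Rabs v * (L * Rabs u)) by (apply Rmult_le_compat_l; lra).
  assert (L * (2 * Rabs u * Rabs v) <= L * (u * u + v * v)) by (apply Rmult_le_compat_l; lra).
  replace (1 + 3/2 * M ^ 2 + Rabs lam) with (1 + L) by (unfold L; ring).
  lra.
Qed.

Definition ode_gap (k k' K K' : R -> R) (s : R) : R :=
  (k s - K s) * (k s - K s) + (k' s - K' s) * (k' s - K' s).

Lemma ode_gap_ge0 k k' K K' s : 0 <= ode_gap k k' K K' s.
Proof.
  unfold ode_gap. pose proof (Rle_0_sqr (k s - K s)); pose proof (Rle_0_sqr (k' s - K' s)).
  unfold Rsqr in *. lra.
Qed.

Section KodeUniqueness.

Variables (lam mu a b : R) (k k' K K' : R -> R).
Hypothesis Hk : forall s, a < s < b -> derivable_pt_lim k s (k' s).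
Hypothesis Hk' : forall s, a < s < b -> derivable_pt_lim k' s (kode lam mu (k s)).
Hypothesis HK : forall s, a < s < b -> derivable_pt_lim K s (K' s).
Hypothesis HK' : forall s, a < s < b -> derivable_pt_lim K' s (kode lam mu (K s)).

Lemma derive_ode_gap s : a < s < b ->
  derivable_pt_lim (ode_gap k k' K K') s
    (2 * (k s - K s) * (k' s - K' s)
     + 2 * (k' s - K' s) * (kode lam mu (k s) - kode lam mu (K s))).
Proof.
  intros Hs.
  replace (2 * (k s - K s) * (k' s - K' s)
           + 2 * (k' s - K' s) * (kode lam mu (k s) - kode lam mu (K s)))
    with ((k' s - K' s) * (k s - K s) + (k s - K s) * (k' s - K' s)
          + ((kode lam mu (k s) - kode lam mu (K s)) * (k' s - K' s)
             + (k' s - K' s) * (kode lam mu (k s) - kode lam mu (K s)))) by ring.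
  pose proof (derivable_pt_lim_minus k K s _ _ (Hk s Hs) (HK s Hs)) as Hu.
  pose proof (derivable_pt_lim_minus k' K' s _ _ (Hk' s Hs) (HK' s Hs)) as Hv.
  exact (derivable_pt_lim_plus _ _ s _ _
           (derivable_pt_lim_mult _ _ s _ _ Hu Hu) (derivable_pt_lim_mult _ _ s _ _ Hv Hv)).
Qed.

Lemma ode_gap_vanish_segment x y : a < x < y -> y < b ->
  (ode_gap k k' K K' x = 0 <-> ode_gap k k' K K' y = 0).
Proof.
  intros Hx Hy.
  assert (Hcont : forall f f', (forall s, a < s < b -> derivable_pt_lim f s (f' s)) ->
                    forall c, x <= c <= y -> continuity_pt f c).
  { intros f f' Hf c Hc. apply derivable_continuous_pt. exists (f' c). apply Hf. lra. }
  destruct (bounded_on_segment k x y ltac:(lra) (Hcont _ _ Hk)) as [M1 HM1].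
  destruct (bounded_on_segment K x y ltac:(lra) (Hcont _ _ HK)) as [M2 HM2].
  assert (0 <= M1) by (pose proof (HM1 x ltac:(lra)); pose proof (Rabs_pos (k x)); lra).
  assert (0 <= M2) by (pose proof (HM2 x ltac:(lra)); pose proof (Rabs_pos (K x)); lra).
  apply (gronwall_vanish _
           (fun s => 2 * (k s - K s) * (k' s - K' s)
                     + 2 * (k' s - K' s) * (kode lam mu (k s) - kode lam mu (K s)))
           (1 + 3/2 * (M1 + M2) ^ 2 + Rabs lam) x y);
    [lra | intros s Hs; apply derive_ode_gap; lra | intros; apply ode_gap_ge0 |].
  intros s Hs. apply kode_energy_derivative_bound.
  - pose proof (HM1 s Hs); lra.
  - pose proof (HM2 s Hs); lra.
Qed.

Lemma kode_solution_unique : a < 0 < b -> k 0 = K 0 -> k' 0 = K' 0 ->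
  forall t, a < t < b -> k t = K t.
Proof.
  intros Hab H0 H0' t Ht.
  assert (Hgap0 : ode_gap k k' K K' 0 = 0) by (unfold ode_gap; rewrite H0, H0'; ring).
  assert (Hgapt : ode_gap k k' K K' t = 0).
  { destruct (Rtotal_order 0 t) as [Hlt | [<- | Hgt]].
    - apply (ode_gap_vanish_segment 0 t); lra.
    - exact Hgap0.
    - apply (ode_gap_vanish_segment t 0); lra. }
  unfold ode_gap in Hgapt.
  assert (Hsq : (k t - K t) * (k t - K t) = 0).
  { pose proof (Rle_0_sqr (k t - K t)); pose proof (Rle_0_sqr (k' t - K' t)).
    unfold Rsqr in *; lra. }
  apply Rmult_integral in Hsq. lra.
Qed.

End KodeUniqueness.

Lemma expanding_of_derive_ge1 (F f : R -> R) :
  (forall x, derivable_pt_lim F x (f x)) -> (forall x, 1 <= f x) ->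
  forall x y, x <= y -> y - x <= F y - F x.
Proof.
  intros HF Hf x y Hxy. destruct (Req_dec x y) as [<- | Hne]; [lra|].
  destruct (MVT_cor2 F f x y) as [c [Hc _]]; [lra | intros; apply HF |].
  rewrite Hc. pose proof (Hf c). nra.
Qed.

Lemma expanding_surjective (F f : R -> R) :
  (forall x, derivable_pt_lim F x (f x)) -> (forall x, 1 <= f x) ->
  forall u, {x | F x = u}.
Proof.
  intros HF Hf u.
  pose proof (expanding_of_derive_ge1 F f HF Hf) as Hexp.
  set (d := Rabs (u - F 0)).
  assert (Hd : - d <= u - F 0 <= d).
  { unfold d; split; [pose proof (Rabs_maj2 (u - F 0)) | pose proof (Rle_abs (u - F 0))]; lra. }
  destruct (IVT_cor (fun x => F x - u) (- d) d) as [x [_ Hx]].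
  - apply continuity_minus; [| apply continuity_const; intros ? ?; reflexivity].
    intros x. apply derivable_continuous_pt. exists (f x). apply HF.
  - lra.
  - pose proof (Hexp (- d) 0); pose proof (Hexp 0 d).
    apply Rmult_le_0_r; lra.
  - exists x. lra.
Qed.

(* The inverse of a map with derivative [>= 1] is [1]-Lipschitz, hence continuous,
   which is what the inverse-function rule needs. *)
Lemma expanding_inverse (F f : R -> R) :
  (forall x, derivable_pt_lim F x (f x)) -> (forall x, 1 <= f x) ->
  exists G : R -> R, (forall u, F (G u) = u) /\ forall u, derivable_pt_lim G u (/ f (G u)).
Proof.
  intros HF Hf.
  pose proof (expanding_of_derive_ge1 F f HF Hf) as Hexp.
  pose proof (expanding_surjective F f HF Hf) as Hsurj.
  set (G := fun u => proj1_sig (Hsurj u)).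
  assert (HG : forall u, F (G u) = u) by (intros u; exact (proj2_sig (Hsurj u))).
  assert (HGlip : forall u v, u <= v -> 0 <= G v - G u <= v - u).
  { intros u v Huv. destruct (Rle_dec (G u) (G v)) as [Hle | Hlt].
    - pose proof (Hexp _ _ Hle). rewrite !HG in *. lra.
    - pose proof (Hexp (G v) (G u)). rewrite !HG in *. lra. }
  assert (HGc : forall u, continuity_pt G u).
  { intros u eps Heps. exists eps. split; [lra|].
    intros v [_ Hv]. simpl in *. unfold R_dist in *.
    destruct (Rle_dec u v) as [Huv | Hvu].
    - pose proof (HGlip u v Huv). rewrite Rabs_right in * by lra. lra.
    - pose proof (HGlip v u ltac:(lra)). rewrite Rabs_left1 in * by lra. lra. }
  exists G. split; [exact HG|]. intros u.
  assert (Hmid : G (u - 1) <= G u <= G (u + 1)).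
  { pose proof (HGlip (u - 1) u); pose proof (HGlip u (u + 1)); lra. }
  assert (Pr : forall x, G (u - 1) <= x <= G (u + 1) -> derivable_pt F x).
  { intros x _. exists (f x). apply HF. }
  assert (Hd : derive_pt F (G u) (Pr (G u) Hmid) = f (G u)) by (apply derive_pt_eq_0, HF).
  pose proof (Ranalysis5.derivable_pt_lim_recip_interv F G (u - 1) (u + 1) u Pr (HGc u)
                ltac:(lra) ltac:(lra) Hmid (fun x _ => HG x)) as Hinv.
  rewrite Hd, Rdiv_1_l in Hinv. apply Hinv. pose proof (Hf (G u)). lra.
Qed.

Lemma jacobi_density_pos m x : 0 < m < 1 -> 0 < 1 - m * sin x ^ 2.
Proof.
  intros Hm. pose proof (sin2_cos2 x). pose proof (pow2_ge_0 (cos x)).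
  unfold Rsqr in *. simpl in *. nra.
Qed.

Lemma jacobi_density_ge1 m x : 0 < m < 1 -> 1 <= / sqrt (1 - m * sin x ^ 2).
Proof.
  intros Hm. pose proof (jacobi_density_pos m x Hm).
  assert (0 <= m * sin x ^ 2) by (apply Rmult_le_pos; [lra | apply pow2_ge_0]).
  assert (sqrt (1 - m * sin x ^ 2) <= 1).
  { rewrite <- sqrt_1 at 2. apply sqrt_le_1_alt. lra. }
  assert (0 < sqrt (1 - m * sin x ^ 2)) by (apply sqrt_lt_R0; lra).
  rewrite <- Rinv_1 at 1. apply Rinv_le_contravar; lra.
Qed.

Lemma jacobi_density_continuous m x : 0 < m < 1 ->
  continuous (fun psi => / sqrt (1 - m * sin psi ^ 2)) x.
Proof.
  intros Hm. apply (@ex_derive_continuous R_AbsRing R_NormedModule). auto_derive.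
  pose proof (jacobi_density_pos m x Hm). split; [lra|].
  split; [| easy]. apply Rgt_not_eq, sqrt_lt_R0. lra.
Qed.

Lemma jacobi_am_exists m : 0 < m < 1 ->
  exists am : R -> R, is_jacobi_am m am /\ am 0 = 0 /\
    forall u, derivable_pt_lim am u (sqrt (1 - m * sin (am u) ^ 2)).
Proof.
  intros Hm.
  set (g := fun psi => / sqrt (1 - m * sin psi ^ 2)).
  assert (Hint : forall x y, ex_RInt g x y).
  { intros x y. apply (@ex_RInt_continuous R_CompleteNormedModule).
    intros; apply jacobi_density_continuous, Hm. }
  assert (HF : forall x, derivable_pt_lim (fun x => RInt g 0 x) x (g x)).
  { intros x. apply is_derive_Reals.
    apply (@is_derive_RInt R_NormedModule g (fun x => RInt g 0 x) 0 x).
    - apply filter_forall. intros y. apply (@RInt_correct R_CompleteNormedModule), Hint.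
    - apply jacobi_density_continuous, Hm. }
  destruct (expanding_inverse _ g HF (fun x => jacobi_density_ge1 m x Hm)) as [am [Ham Ham']].
  exists am. split; [| split].
  - intros u. exists (ex_RInt_Reals_0 _ _ _ (Hint 0 (am u))).
    rewrite <- RInt_Reals. apply Ham.
  - pose proof (expanding_of_derive_ge1 _ g HF (fun x => jacobi_density_ge1 m x Hm)) as Hexp.
    assert (Hzero : RInt g 0 (am 0) = RInt g 0 0).
    { rewrite Ham. symmetry. apply (@RInt_point R_CompleteNormedModule). }
    destruct (Rle_dec (am 0) 0) as [Hle | Hgt].
    + pose proof (Hexp _ _ Hle). lra.
    + pose proof (Hexp 0 (am 0) ltac:(lra)). lra.
  - intros u. specialize (Ham' u). unfold g in Ham'. rewrite Rinv_inv in Ham'. exact Ham'.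
Qed.

Definition mobius (al be ga C : R) : R := (al * C + be) / (ga * C + 1).

(* The second derivative of [s |-> mobius al be ga (cn (w s))] is
   [- (al - be ga) w^2 mobius_accel m ga (cn (w s))], once [sn^2 = 1 - cn^2]
   and [dn^2 = 1 - m sn^2] are eliminated. *)
Definition mobius_accel (m ga C : R) : R :=
  C * (1 - 2 * m * (1 - C ^ 2)) / (ga * C + 1) ^ 2
  + 2 * ga * (1 - C ^ 2) * (1 - m * (1 - C ^ 2)) / (ga * C + 1) ^ 3.

Section MobiusCn.

Variables (m al be ga w : R) (am : R -> R).
Hypothesis Hm : 0 < m < 1.
Hypothesis Hga : -1 < ga < 1.
Hypothesis am_deriv : forall u, derivable_pt_lim am u (sqrt (1 - m * sin (am u) ^ 2)).

Definition mobius_cn (s : R) : R := mobius al be ga (cos (am (w * s))).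

Definition mobius_cn_deriv (s : R) : R :=
  - (al - be * ga) * w * sin (am (w * s)) * sqrt (1 - m * sin (am (w * s)) ^ 2)
  / (ga * cos (am (w * s)) + 1) ^ 2.

Lemma mobius_denominator_lower_bound C : Rabs C <= 1 -> 1 - Rabs ga <= ga * C + 1.
Proof.
  intros HC. pose proof (Rabs_pos ga).
  assert (Rabs (ga * C) <= Rabs ga) by (rewrite Rabs_mult; nra).
  pose proof (Rabs_maj2 (ga * C)). lra.
Qed.

Lemma mobius_denominator_pos x : 0 < ga * cos x + 1.
Proof.
  assert (Rabs ga < 1) by (apply Rabs_def1; lra).
  pose proof (mobius_denominator_lower_bound (cos x) (Rabs_le _ _ (COS_bound x))). lra.
Qed.

Lemma derive_comp_am (H h : R -> R) s : (forall x, derivable_pt_lim H x (h x)) ->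
  derivable_pt_lim (fun s => H (am (w * s))) s
    (h (am (w * s)) * (sqrt (1 - m * sin (am (w * s)) ^ 2) * w)).
Proof.
  intros HH. apply (derivable_pt_lim_comp (fun s => am (w * s)) H); [| apply HH].
  apply (derivable_pt_lim_comp (fun s => w * s) am); [| apply am_deriv].
  apply is_derive_Reals. auto_derive; [easy | ring].
Qed.

Lemma derive_mobius_cn s : derivable_pt_lim mobius_cn s (mobius_cn_deriv s).
Proof.
  unfold mobius_cn_deriv.
  replace (- (al - be * ga) * w * sin (am (w * s)) * sqrt (1 - m * sin (am (w * s)) ^ 2)
           / (ga * cos (am (w * s)) + 1) ^ 2)
    with ((- (al - be * ga) * sin (am (w * s)) / (ga * cos (am (w * s)) + 1) ^ 2)
          * (sqrt (1 - m * sin (am (w * s)) ^ 2) * w))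
    by (pose proof (mobius_denominator_pos (am (w * s))); field; lra).
  apply (derive_comp_am (fun x => mobius al be ga (cos x))
           (fun x => - (al - be * ga) * sin x / (ga * cos x + 1) ^ 2)).
  intros x. pose proof (mobius_denominator_pos x).
  apply is_derive_Reals. unfold mobius. auto_derive; [lra | field; lra].
Qed.

Lemma derive_mobius_cn_deriv s :
  derivable_pt_lim mobius_cn_deriv s
    (- (al - be * ga) * w ^ 2 * mobius_accel m ga (cos (am (w * s)))).
Proof.
  set (g := fun x => - (al - be * ga) * w *
              (cos x * sqrt (1 - m * sin x ^ 2) ^ 2 / (ga * cos x + 1) ^ 2
               - m * sin x ^ 2 * cos x / (ga * cos x + 1) ^ 2
               + 2 * ga * sin x ^ 2 * sqrt (1 - m * sin x ^ 2) ^ 2 / (ga * cos x + 1) ^ 3)).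
  assert (Hg : forall x, g x = - (al - be * ga) * w * mobius_accel m ga (cos x)).
  { intros x. pose proof (mobius_denominator_pos x). unfold g, mobius_accel.
    rewrite pow2_sqrt by (apply Rlt_le, jacobi_density_pos, Hm).
    replace (sin x ^ 2) with (1 - cos x ^ 2) by (pose proof (sin2_cos2 x); unfold Rsqr in *; nra).
    field. lra. }
  replace (- (al - be * ga) * w ^ 2 * mobius_accel m ga (cos (am (w * s))))
    with (g (am (w * s)) / sqrt (1 - m * sin (am (w * s)) ^ 2)
          * (sqrt (1 - m * sin (am (w * s)) ^ 2) * w)).
  2:{ rewrite Hg. field. apply Rgt_not_eq, sqrt_lt_R0, jacobi_density_pos, Hm. }
  unfold mobius_cn_deriv.
  apply (derive_comp_am (fun x => - (al - be * ga) * w * sin x * sqrt (1 - m * sin x ^ 2)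
                                  / (ga * cos x + 1) ^ 2)
                        (fun x => g x / sqrt (1 - m * sin x ^ 2))).
  intros x. pose proof (mobius_denominator_pos x). pose proof (jacobi_density_pos m x Hm).
  assert (0 < sqrt (1 - m * sin x ^ 2)) by (apply sqrt_lt_R0; lra).
  apply is_derive_Reals. auto_derive.
  - replace (1 + - (m * (sin x * (sin x * 1)))) with (1 - m * sin x ^ 2) by ring.
    repeat split; [lra | apply Rgt_not_eq; nra].
  - replace (1 + - (m * (sin x * (sin x * 1)))) with (1 - m * sin x ^ 2) by ring.
    unfold g. field. lra.
Qed.

Lemma mobius_cn_bounded : exists M, forall s, Rabs (mobius_cn s) <= M.
Proof.
  assert (Hga1 : Rabs ga < 1) by (apply Rabs_def1; lra).
  exists ((Rabs al + Rabs be) / (1 - Rabs ga)). intros s. unfold mobius_cn, mobius.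
  set (C := cos (am (w * s))).
  assert (HC : Rabs C <= 1) by apply Rabs_le, COS_bound.
  pose proof (mobius_denominator_lower_bound C HC) as HD.
  assert (HN : Rabs (al * C + be) <= Rabs al + Rabs be).
  { eapply Rle_trans; [apply Rabs_triang|]. rewrite Rabs_mult.
    pose proof (Rabs_pos al). nra. }
  unfold Rdiv. rewrite Rabs_mult, Rabs_inv, (Rabs_pos_eq (ga * C + 1)) by lra.
  apply Rmult_le_compat; [apply Rabs_pos | apply Rlt_le, Rinv_0_lt_compat; lra | exact HN |].
  apply Rinv_le_contravar; lra.
Qed.

End MobiusCn.

Section CnParameters.

Variables lam mu kM kn : R.
Hypothesis Hlam : 0 <= lam.
Hypothesis Hkn : - kM < kn < kM.
Hypothesis Hmu : 8 * mu = (kM + kn) * (4 * lam + kM ^ 2 + kn ^ 2).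

Definition cn_A : R := sqrt (2 * kM ^ 2 + 4 * lam + (kM + kn) ^ 2).
Definition cn_B : R := sqrt (2 * kn ^ 2 + 4 * lam + (kM + kn) ^ 2).
Definition cn_alpha : R := (cn_B * kM - cn_A * kn) / (cn_A + cn_B).
Definition cn_beta : R := (cn_A * kn + cn_B * kM) / (cn_A + cn_B).
Definition cn_gamma : R := (cn_B - cn_A) / (cn_A + cn_B).
Definition cn_m : R := ((kM - kn) ^ 2 - (cn_A - cn_B) ^ 2) / (4 * cn_A * cn_B).
Definition cn_omega : R := sqrt (cn_A * cn_B) / 2.

Lemma cn_A_sq : cn_A ^ 2 = 2 * kM ^ 2 + 4 * lam + (kM + kn) ^ 2.
Proof. apply pow2_sqrt. nra. Qed.

Lemma cn_B_sq : cn_B ^ 2 = 2 * kn ^ 2 + 4 * lam + (kM + kn) ^ 2.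
Proof. apply pow2_sqrt. nra. Qed.

Lemma cn_A_pos : 0 < cn_A.
Proof. apply sqrt_lt_R0. nra. Qed.

Lemma cn_B_pos : 0 < cn_B.
Proof. apply sqrt_lt_R0. nra. Qed.

Lemma cn_B_lt_A : cn_B < cn_A.
Proof. pose proof cn_A_sq; pose proof cn_B_sq; pose proof cn_A_pos; pose proof cn_B_pos. nra. Qed.

Lemma cn_gamma_range : -1 < cn_gamma < 0.
Proof.
  pose proof cn_A_pos; pose proof cn_B_pos; pose proof cn_B_lt_A.
  unfold cn_gamma. split.
  - apply Rlt_div_r; lra.
  - apply Rdiv_neg_pos; lra.
Qed.

Lemma cn_m_range : 0 < cn_m < 1.
Proof.
  pose proof cn_A_sq; pose proof cn_B_sq; pose proof cn_A_pos; pose proof cn_B_pos.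
  pose proof cn_B_lt_A.
  assert (HAs : kM + kn < cn_A) by nra.
  assert (HBs : kM + kn <= cn_B) by nra.
  assert (Hdiff : (cn_A - cn_B) * (cn_A + cn_B) = 2 * (kM + kn) * (kM - kn)) by nra.
  assert (HAB : cn_A - cn_B < kM - kn) by nra.
  assert (0 < 4 * cn_A * cn_B) by nra.
  unfold cn_m. split.
  - apply Rdiv_lt_0_compat; nra.
  - apply Rlt_div_l; nra.
Qed.

Lemma cn_omega_pos : 0 < cn_omega.
Proof.
  pose proof cn_A_pos; pose proof cn_B_pos.
  assert (0 < sqrt (cn_A * cn_B)) by (apply sqrt_lt_R0; nra).
  unfold cn_omega. lra.
Qed.

Lemma cn_omega_sq : cn_omega ^ 2 = cn_A * cn_B / 4.
Proof.
  pose proof cn_A_pos; pose proof cn_B_pos. unfold cn_omega.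
  replace ((sqrt (cn_A * cn_B) / 2) ^ 2) with (sqrt (cn_A * cn_B) ^ 2 / 4) by field.
  rewrite pow2_sqrt; nra.
Qed.

Lemma mobius_cn_at_one : mobius cn_alpha cn_beta cn_gamma 1 = kM.
Proof.
  pose proof cn_A_pos; pose proof cn_B_pos.
  unfold mobius, cn_alpha, cn_beta, cn_gamma. field. split; lra.
Qed.

Lemma kode_mobius_accel C : cn_gamma * C + 1 <> 0 ->
  - (cn_alpha - cn_beta * cn_gamma) * cn_omega ^ 2 * mobius_accel cn_m cn_gamma C
  = kode lam mu (mobius cn_alpha cn_beta cn_gamma C).
Proof.
  intros HD.
  pose proof cn_A_sq as HA2; pose proof cn_B_sq as HB2.
  pose proof cn_A_pos as HA; pose proof cn_B_pos as HB.
  rewrite cn_omega_sq.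
  unfold cn_alpha, cn_beta, cn_gamma, cn_m, mobius, mobius_accel in *.
  set (A := cn_A) in *. set (B := cn_B) in *. clearbody A B.
  set (s := kM + kn) in *.
  assert (Hs : 0 < s) by (unfold s; lra).
  (* kM, kn, lam and mu are rational in s, A and B, so the identity becomes a field identity. *)
  assert (EkM : kM = (s + (A ^ 2 - B ^ 2) / (2 * s)) / 2).
  { rewrite HA2, HB2. unfold s. field. lra. }
  assert (Ekn : kn = (s - (A ^ 2 - B ^ 2) / (2 * s)) / 2).
  { rewrite HA2, HB2. unfold s. field. lra. }
  assert (Elam : lam = (A ^ 2 - 2 * kM ^ 2 - s ^ 2) / 4) by lra.
  assert (Emu : mu = s * (4 * lam + kM ^ 2 + kn ^ 2) / 8) by lra.
  assert (HD' : (B - A) * C + (A + B) <> 0).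
  { intros H0. apply HD.
    replace ((B - A) / (A + B) * C + 1) with (((B - A) * C + (A + B)) / (A + B)) by (field; lra).
    rewrite H0. field. lra. }
  clearbody s. clear HA2 HB2 HD. subst mu lam. subst kM kn.
  unfold kode. field. repeat split; lra.
Qed.

Lemma kode_cn_solution :
  exists K K' : R -> R,
    (forall s, derivable_pt_lim K s (K' s)) /\
    (forall s, derivable_pt_lim K' s (kode lam mu (K s))) /\
    K 0 = kM /\ K' 0 = 0 /\
    (exists M, forall s, Rabs (K s) <= M) /\
    exists alpha beta gamma omega m : R,
      -1 < gamma < 0 /\ 0 < omega /\ 0 < m < 1 /\
      exists cn : R -> R, is_jacobi_cn m cn /\
        forall s, K s = (alpha * cn (omega * s) + beta) / (gamma * cn (omega * s) + 1).
Proof.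
  pose proof cn_m_range as Hm. pose proof cn_gamma_range as Hga.
  assert (Hga' : -1 < cn_gamma < 1) by lra.
  destruct (jacobi_am_exists cn_m Hm) as [am [Hjac [Ham0 Ham']]].
  exists (mobius_cn cn_alpha cn_beta cn_gamma cn_omega am),
         (mobius_cn_deriv cn_m cn_alpha cn_beta cn_gamma cn_omega am).
  split; [| split; [| split; [| split; [| split]]]].
  - intros s. exact (derive_mobius_cn _ _ _ _ _ _ Hga' Ham' s).
  - intros s. unfold mobius_cn. rewrite <- kode_mobius_accel.
    + exact (derive_mobius_cn_deriv _ _ _ _ _ _ Hm Hga' Ham' s).
    + apply Rgt_not_eq, (mobius_denominator_pos cn_gamma Hga').
  - unfold mobius_cn. rewrite Rmult_0_r, Ham0, cos_0. apply mobius_cn_at_one.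
  - unfold mobius_cn_deriv. rewrite Rmult_0_r, Ham0, sin_0. unfold Rdiv. ring.
  - exact (mobius_cn_bounded _ _ _ _ _ Hga').
  - exists cn_alpha, cn_beta, cn_gamma, cn_omega, cn_m.
    split; [exact Hga | split; [exact cn_omega_pos | split; [exact Hm |]]].
    exists (fun u => cos (am u)). split; [exists am; split; [exact Hjac | reflexivity] |].
    reflexivity.
Qed.

End CnParameters.

Lemma second_derivative_nonpos_at_max (k k' : R -> R) a b d : a < 0 < b ->
  (forall s, a < s < b -> derivable_pt_lim k s (k' s)) ->
  derivable_pt_lim k' 0 d -> k' 0 = 0 ->
  (forall s, a < s < b -> k s <= k 0) -> d <= 0.
Proof.
  intros Hab Hk Hd H0' Hmax. apply Rnot_lt_le. intros Hpos.
  destruct (Hd (d / 2) ltac:(lra)) as [del Hdel]. pose proof (cond_pos del).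
  set (t := Rmin del b / 2).
  assert (Ht : 0 < t < del /\ t < b) by (unfold t, Rmin; destruct (Rle_dec del b); lra).
  destruct (MVT_cor2 k k' 0 t) as [c [Hc Hcin]]; [lra | intros; apply Hk; lra |].
  specialize (Hdel c ltac:(lra) ltac:(rewrite Rabs_right; lra)).
  rewrite Rplus_0_l, H0', Rminus_0_r in Hdel.
  assert (Hslope : d / 2 < k' c / c) by (apply Rabs_def2 in Hdel; lra).
  assert (0 < k' c).
  { apply Rmult_lt_reg_r with (/ c); [apply Rinv_0_lt_compat; lra|]. lra. }
  pose proof (Hmax t ltac:(lra)). nra.
Qed.

Lemma kode_neg_at_nonconstant_max lam mu kM a b (k k' : R -> R) : a < 0 < b ->
  (forall s, a < s < b -> derivable_pt_lim k s (k' s)) ->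
  (forall s, a < s < b -> derivable_pt_lim k' s (kode lam mu (k s))) ->
  k 0 = kM -> k' 0 = 0 ->
  (exists s, a < s < b /\ k s <> k 0) ->
  (forall s, a < s < b -> k s <= kM) ->
  kode lam mu kM < 0.
Proof.
  intros Hab Hk Hk' H0 H0' [s0 [Hs0 Hne]] Hmax.
  assert (Hle : kode lam mu kM <= 0).
  { apply (second_derivative_nonpos_at_max k k' a b); auto.
    - rewrite <- H0. apply Hk'. lra.
    - rewrite H0. exact Hmax. }
  destruct Hle as [Hlt | Heq]; [exact Hlt | exfalso].
  apply Hne. rewrite H0.
  apply (kode_solution_unique lam mu a b k k' (fun _ => kM) (fun _ => 0)); auto.
  - intros; apply derivable_pt_lim_const.
  - intros s _. rewrite Heq. apply derivable_pt_lim_const.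
Qed.

Lemma kode_companion_root lam mu kM : 0 < mu -> 0 <= lam -> kode lam mu kM < 0 ->
  exists kn, - kM < kn < kM /\ 8 * mu = (kM + kn) * (4 * lam + kM ^ 2 + kn ^ 2).
Proof.
  intros Hmu Hlam Hneg. unfold kode in Hneg.
  assert (HkM : 0 < kM) by nra.
  set (P := fun x => (kM + x) * (4 * lam + kM ^ 2 + x ^ 2) - 8 * mu).
  assert (HPlo : P (- kM) = - 8 * mu) by (unfold P; ring).
  assert (HPhi : 0 < P kM) by (unfold P; nra).
  destruct (IVT_cor P (- kM) kM) as [kn [Hkn HPkn]].
  - unfold P. reg.
  - lra.
  - rewrite HPlo. nra.
  - exists kn. unfold P in *. split; [split |].
    + destruct (Req_dec kn (- kM)) as [E | E]; [| lra].
      rewrite E in HPkn. fold P in HPkn. lra.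
    + destruct (Req_dec kn kM) as [E | E]; [| lra].
      rewrite E in HPkn. fold P in HPkn. lra.
    + lra.
Qed.

Theorem mainTheorem16 (mu lam kM a b : R) (k k' : R -> R)
  (Hmu : 0 < mu) (Hlam : 0 <= lam) (Ha : a < 0) (Hb : 0 < b)
  (Hk : forall s, a < s < b -> derivable_pt_lim k s (k' s))
  (Hk' : forall s, a < s < b -> derivable_pt_lim k' s (kode lam mu (k s)))
  (H0 : k 0 = kM) (H0' : k' 0 = 0)
  (Hnc : exists s, a < s < b /\ k s <> k 0)
  (Hmax : forall s, a < s < b -> k s <= kM) :
  exists K K' : R -> R,
    (forall s, derivable_pt_lim K s (K' s)) /\
    (forall s, derivable_pt_lim K' s (kode lam mu (K s))) /\
    (forall s, a < s < b -> K s = k s) /\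
    (exists M, forall s, Rabs (K s) <= M) /\
    exists alpha beta gamma omega m : R,
      -1 < gamma < 0 /\ 0 < omega /\ 0 < m < 1 /\
      exists cn : R -> R, is_jacobi_cn m cn /\
        forall s, K s = (alpha * cn (omega * s) + beta) / (gamma * cn (omega * s) + 1).
Proof.
  assert (Hab : a < 0 < b) by lra.
  pose proof (kode_neg_at_nonconstant_max lam mu kM a b k k' Hab Hk Hk' H0 H0' Hnc Hmax) as Hneg.
  destruct (kode_companion_root lam mu kM Hmu Hlam Hneg) as [kn [Hkn Hrel]].
  destruct (kode_cn_solution lam mu kM kn Hlam Hkn Hrel)
    as (K & K' & HK & HK' & HK0 & HK'0 & Hbound & Hcn).
  exists K, K'. do 2 (split; [assumption |]). split; [| split; assumption].
  intros s Hs. symmetry.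
  apply (kode_solution_unique lam mu a b k k' K K' Hk Hk'); auto; congruence.
Qed.
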